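(* Let $A\in\mathbb{R}^{m\times n}$, $b\in\mathbb{R}^m$ with $\{x:Ax=b\}\neq\emptyset$, and take $\delta=0$. Let $x^*$ be an optimal solution of $\min\{\|x\|_0: Ax=b\}$, let $I^*=\{i: x^*_i\neq0\}$ and $\bar I^*=\{1,\dots,n\}\setminus I^*$. Say that a vector $v\in\mathbb{R}^n_+$ satisfies the null space condition (NSC) if $$\langle v_{I^*},|y_{I^*}|\rangle<\langle v_{\bar I^*},|y_{\bar I^*}|\rangle\quad\text{for every } 0\neq y\in\operatorname{Null}(A).$$ Consider the iterates $x^k,v^k$ generated by the exact penalty decomposition method described in the context (with $\delta=0$). Assume $v^k$ satisfies (NSC) for some nonnegative integer $k$. Then $x^{k+1}=x^*$. If, in addition, $v^{k+1}$ also satisfies (NSC), then $v^{k+l}$ satisfies (NSC) for all $l\ge2$ and $x^{k+l+1}=x^*$ for all $l\ge1$. Consequently, if $v^0$ satisfies (NSC), then $x^k=x^*$ for all $k\ge1$.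
   Context: Exact penalty decomposition method: (S.0) Given a tolerance $\epsilon>0$ and a ratio $\sigma>1$, choose $\rho_0>0$, set $v^0=e$ (the all-ones vector in $\mathbb{R}^n$) and $k:=0$. (S.1) Choose $x^{k+1}\in\arg\min_{x\in\mathbb{R}^n}\{\langle v^k,|x|\rangle:\ \|Ax-b\|\le\delta\}$. (S.2) For each $i$, set $v^{k+1}_i=0$ if $|x^{k+1}_i|>1/\rho_k$ and $v^{k+1}_i=1$ otherwise. (S.3) If $\langle v^{k+1},|x^{k+1}|\rangle\le\epsilon$, stop; otherwise go to (S.4). (S.4) Set $\rho_{k+1}=\sigma\rho_k$, $k:=k+1$, and go to (S.1). Here $\|x\|_0$ is the number of nonzero entries of $x$, $|x|$ the componentwise absolute value, $x_I$ the subvector of $x$ indexed by $I$, and $\operatorname{Null}(A)$ the null space of $A$. Statements about iterates refer to the iterates generated by the method. *)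

From mathcomp Require Import all_boot all_order all_algebra.
Set Implicit Arguments. Unset Strict Implicit. Unset Printing Implicit Defensive.
Import Order.TTheory GRing.Theory Num.Theory.
Local Open Scope ring_scope.

(* Vectors of R^n are column vectors 'cV[R]_n; x i 0 is the i-th entry. *)

Definition l0norm (R : realFieldType) (n : nat) (x : 'cV[R]_n) : nat :=
  #|[set i : 'I_n | x i 0 != 0]|.

Definition wl1 (R : realFieldType) (n : nat) (v x : 'cV[R]_n) : R :=
  \sum_(i < n) v i 0 * `|x i 0|.

Definition supp (R : realFieldType) (n : nat) (x : 'cV[R]_n) : {set 'I_n} :=
  [set i : 'I_n | x i 0 != 0].

Definition l0_optimal (R : realFieldType) (m n : nat)
    (A : 'M[R]_(m, n)) (b : 'cV[R]_m) (xs : 'cV[R]_n) : Prop :=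
  A *m xs = b /\ forall z : 'cV[R]_n, A *m z = b -> (l0norm xs <= l0norm z)%N.

Definition NSC (R : realFieldType) (m n : nat)
    (A : 'M[R]_(m, n)) (xs : 'cV[R]_n) (v : 'cV[R]_n) : Prop :=
  (forall i, 0 <= v i 0) /\
  forall y : 'cV[R]_n, y != 0 -> A *m y = 0 ->
    \sum_(i in supp xs) v i 0 * `|y i 0| <
    \sum_(i in ~: supp xs) v i 0 * `|y i 0|.

(* Iterates of the exact penalty decomposition method with delta = 0
   (steps S.0, S.1, S.2, S.4; the stopping test S.3 is not modelled). *)
Definition EPD_iterates (R : realFieldType) (m n : nat)
    (A : 'M[R]_(m, n)) (b : 'cV[R]_m) (sigma : R)
    (rho : nat -> R) (x v : nat -> 'cV[R]_n) : Prop :=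
  [/\ 0 < rho 0%N,
      v 0%N = const_mx 1,
      forall k, rho k.+1 = sigma * rho k,
      forall k, A *m x k.+1 = b /\
        (forall z : 'cV[R]_n, A *m z = b -> wl1 (v k) (x k.+1) <= wl1 (v k) z)
    & forall k (i : 'I_n),
        v k.+1 i 0 = (if (rho k)^-1 < `|x k.+1 i 0| then 0 else 1)].

(* Under (NSC) for v, the minimiser x* of the l0-problem is also the unique
   minimiser of the weighted l1-problem min {<v,|x|> : Ax = b}: writing a
   competitor as x* + y with 0 <> y in Null(A), the triangle inequality on I*
   and (NSC) give <v,|x* + y|> > <v,|x*|>.  Hence x^{k+1} = x* whenever v^k
   satisfies (NSC).  Once two consecutive iterates equal x*, the new weights
   are 1 off I* (as x*_i = 0 there) and can only decrease on I*, because the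
   thresholds 1/rho_k decrease; such a change of weights preserves (NSC).  So
   (NSC) for two consecutive weights propagates to all later ones. *)

From mathcomp Require Import all_boot all_order all_algebra.
From mathcomp Require Import lra.
Import Order.TTheory GRing.Theory Num.Theory.
Local Open Scope ring_scope.

Lemma sum_setC_split {R : realFieldType} {n : nat} (F : 'I_n -> R)
    (S : {set 'I_n}) :
  \sum_(i < n) F i = \sum_(i in S) F i + \sum_(i in ~: S) F i.
Proof.
by rewrite (bigID (mem S)) /=; congr (_ + _); apply: eq_bigl => i; rewrite in_setC.
Qed.

Section WeightedL1.

Context {R : realFieldType} {m n : nat} {A : 'M[R]_(m, n)} {xs : 'cV[R]_n}.

Lemma wl1_supp (v : 'cV[R]_n) :
  wl1 v xs = \sum_(i in supp xs) v i 0 * `|xs i 0|.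
Proof.
rewrite /wl1 (sum_setC_split _ (supp xs)) [X in _ + X]big1 ?addr0 // => i.
by rewrite in_setC inE negbK => /eqP ->; rewrite normr0 mulr0.
Qed.

Lemma NSC_wl1_lt {v z : 'cV[R]_n} :
  NSC A xs v -> A *m z = A *m xs -> z != xs -> wl1 v xs < wl1 v z.
Proof.
move=> [v_ge0 nsc] Az z_neq; set y := z - xs.
have y_neq0 : y != 0 by rewrite subr_eq0.
have Ay : A *m y = 0 by rewrite mulmxBr Az subrr.
have z_off : forall i, i \in ~: supp xs -> z i 0 = y i 0.
  by move=> i; rewrite in_setC inE negbK => /eqP xi0; rewrite !mxE xi0 subr0.
have z_lb : \sum_(i in supp xs) v i 0 * `|xs i 0|
            - \sum_(i in supp xs) v i 0 * `|y i 0|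
            + \sum_(i in ~: supp xs) v i 0 * `|y i 0| <= wl1 v z.
  rewrite /wl1 (sum_setC_split _ (supp xs)) -sumrB; apply: lerD.
    apply: ler_sum => i _; rewrite -mulrBr ler_wpM2l //.
    have -> : z i 0 = xs i 0 + y i 0 by rewrite !mxE addrCA subrr addr0.
    exact: lerB_normD.
  by apply: ler_sum => i /z_off ->.
move: (nsc y y_neq0 Ay) z_lb; rewrite wl1_supp; lra.
Qed.

Lemma NSC_wl1_minimizer {v z : 'cV[R]_n} :
  NSC A xs v -> A *m z = A *m xs -> wl1 v z <= wl1 v xs -> z = xs.
Proof.
move=> nsc Az z_le; apply/eqP/negPn/negP => z_neq.
by rewrite (lt_geF (NSC_wl1_lt nsc Az z_neq)) in z_le.
Qed.

Lemma NSC_weaken {v w : 'cV[R]_n} :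
  NSC A xs v -> (forall i, 0 <= w i 0) ->
  (forall i, i \in supp xs -> w i 0 <= v i 0) ->
  (forall i, i \notin supp xs -> w i 0 = v i 0) -> NSC A xs w.
Proof.
move=> [_ nsc] w_ge0 w_le w_eq; split=> // y y_neq0 Ay.
apply: (le_lt_trans _ (lt_le_trans (nsc y y_neq0 Ay) _)).
  by apply: ler_sum => i /w_le wi_le; rewrite ler_wpM2r.
by apply: ler_sum => i i_off; rewrite w_eq // -in_setC.
Qed.

End WeightedL1.

Section ExactPenaltyDecomposition.

Context {R : realFieldType} {m n : nat} {A : 'M[R]_(m, n)} {b : 'cV[R]_m}.
Context {sigma : R} {rho : nat -> R} {x v : nat -> 'cV[R]_n} {xs : 'cV[R]_n}.
Hypotheses (sigma_gt1 : 1 < sigma) (Axs : A *m xs = b).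
Hypothesis epd : EPD_iterates A b sigma rho x v.

Lemma epd_rho_gt0 k : 0 < rho k.
Proof.
case: epd => rho0_gt0 _ rhoS _ _; elim: k => // k IH.
by rewrite rhoS mulr_gt0 // (lt_trans ltr01).
Qed.

Lemma epd_v_ge0 k i : 0 <= v k i 0.
Proof.
case: epd => _ v0 _ _ vS; case: k => [|k]; first by rewrite v0 mxE.
by rewrite vS; case: ifP.
Qed.

Lemma epd_v_le1 k i : v k i 0 <= 1.
Proof.
case: epd => _ v0 _ _ vS; case: k => [|k]; first by rewrite v0 mxE.
by rewrite vS; case: ifP.
Qed.

Lemma epd_x_eq {k : nat} : NSC A xs (v k) -> x k.+1 = xs.
Proof.
case: epd => _ _ _ xS _ nsc; have [Ax x_min] := xS k.
by apply: NSC_wl1_minimizer nsc _ (x_min _ Axs); rewrite Ax Axs.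
Qed.

Lemma epd_v_off_supp k i : x k.+1 = xs -> i \notin supp xs -> v k.+1 i 0 = 1.
Proof.
case: epd => _ _ _ _ vS xk; rewrite inE negbK => /eqP xi0.
by rewrite vS xk xi0 normr0 ltNge ltW // invr_gt0 epd_rho_gt0.
Qed.

Lemma epd_v_antitone k i :
  x k.+1 = xs -> x k.+2 = xs -> v k.+2 i 0 <= v k.+1 i 0.
Proof.
case: epd => _ _ rhoS _ vS x1 x2; rewrite !vS x1 x2.
have rho_inv_lt : (rho k.+1)^-1 < (rho k)^-1.
  rewrite ltf_pV2 ?posrE ?epd_rho_gt0 // rhoS.
  by rewrite -{1}[rho k]mul1r ltr_pM2r ?epd_rho_gt0.
case: (ltP (rho k.+1)^-1 `|xs i 0|) => [_|xi_le]; first by case: ifP.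
by rewrite lt_gtF // (le_lt_trans xi_le rho_inv_lt).
Qed.

Lemma epd_NSC_1 : NSC A xs (v 0%N) -> NSC A xs (v 1%N).
Proof.
move=> nsc0; have x1 := epd_x_eq nsc0; case: epd => _ v0 _ _ _.
apply: NSC_weaken nsc0 _ _ _ => [i|i _|i i_off]; first exact: epd_v_ge0.
  by rewrite v0 mxE epd_v_le1.
by rewrite v0 mxE epd_v_off_supp.
Qed.

Lemma epd_NSC_SS k : NSC A xs (v k) -> NSC A xs (v k.+1) -> NSC A xs (v k.+2).
Proof.
move=> nsc0 nsc1; have x1 := epd_x_eq nsc0; have x2 := epd_x_eq nsc1.
apply: NSC_weaken nsc1 _ _ _ => [i|i _|i i_off]; first exact: epd_v_ge0.
  exact: epd_v_antitone.
by rewrite !epd_v_off_supp.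
Qed.

Lemma epd_NSC_from k :
  NSC A xs (v k) -> NSC A xs (v k.+1) -> forall l, NSC A xs (v (k + l)%N).
Proof.
move=> nsc0 nsc1 l.
suff : NSC A xs (v (k + l)%N) /\ NSC A xs (v (k + l).+1) by case.
elim: l => [|l [IH0 IH1]]; first by rewrite addn0.
by rewrite addnS; split=> //; apply: epd_NSC_SS.
Qed.

End ExactPenaltyDecomposition.

Theorem theorem3p3 (R : realFieldType) (m n : nat)
    (A : 'M[R]_(m, n)) (b : 'cV[R]_m) (sigma : R)
    (rho : nat -> R) (x v : nat -> 'cV[R]_n) (xs : 'cV[R]_n) :
  (exists x0 : 'cV[R]_n, A *m x0 = b) ->
  1 < sigma ->
  l0_optimal A b xs ->
  EPD_iterates A b sigma rho x v ->
  (forall k : nat,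
     NSC A xs (v k) ->
       x k.+1 = xs /\
       (NSC A xs (v k.+1) ->
          (forall l : nat, (2 <= l)%N -> NSC A xs (v (k + l)%N)) /\
          (forall l : nat, (1 <= l)%N -> x (k + l).+1 = xs))) /\
  (NSC A xs (v 0%N) -> forall k : nat, (1 <= k)%N -> x k = xs).
Proof.
move=> _ sigma_gt1 [Axs _] epd.
have NSC_from := epd_NSC_from sigma_gt1 Axs epd.
have x_eq := epd_x_eq Axs epd.
split=> [k nsc0|nsc0 [//|k] _].
  split=> [|nsc1]; first exact: x_eq.
  by split=> l _; [|apply: x_eq]; apply: NSC_from.
apply: x_eq; rewrite -[k]add0n.
exact: NSC_from nsc0 (epd_NSC_1 sigma_gt1 Axs epd nsc0) k.
Qed.
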